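(* For every sufficiently large integer $\ell$, with $m=2^\ell$, and every unsatisfiable $k$-CNF formula $\varphi$ with $M$ clauses on $N$ Boolean variables, $\varphi\circ\mathrm{IND}_m^N$ is a $k(\ell+1)$-CNF formula with $M'=m^kM$ clauses on $N'=N(\ell+m)$ variables, and $$\mathrm{tree}_{Res(\oplus)}(\varphi\circ\mathrm{IND}_m^N)\ge\mathrm{tree}_{Res}(\varphi)\ge 2^{\mathrm{width}_{Res}(\varphi)-k}.$$
   Context: Lifted CNF: with $m=2^\ell$, $\varphi\circ\mathrm{IND}_m^N$ has variables $x_{i,j'}$ ($i\in[N]$, $0\le j'<\ell$) and $y_{i,j}$ ($i\in[N]$, $0\le j<m$); $x_{i,*}$ encodes in binary a number $x_i\in\{0,\dots,m-1\}$ and $z_i$ is interpreted as $y_{i,x_i}$. Each clause $z_{i_1}^{b_1}\lor\cdots\lor z_{i_k}^{b_k}$ of $\varphi$ is replaced by $m^k$ clauses, one for each tuple $(j_1,\dots,j_k)\in\{0,\dots,m-1\}^k$, expressing: if $x_{i_1,*}$ encodes $j_1$, ..., and $x_{i_k,*}$ encodes $j_k$, then $y_{i_1,j_1}^{b_1}\lor\cdots\lor y_{i_k,j_k}^{b_k}$. A resolution refutation of $\varphi$ is a sequence of clauses ending in the empty clause, each being a clause of $\varphi$ or derived from two earlier ones by $\frac{A\lor z,\ B\lor\bar z}{A\lor B}$; it is tree-like if its derivation dag is a tree. $\mathrm{tree}_{Res}(\varphi)$ is the minimum size of a tree-like resolution refutation; $\mathrm{width}_{Res}(\varphi)$ is the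 minimum, over all resolution refutations, of the maximum clause length in it. A $Res(\oplus)$ refutation of $\varphi$ on variables $Z$ is a sequence of affine subspaces of $\mathbb{F}_2^Z$ ending in $\mathbb{F}_2^Z$, each being the set of assignments falsifying some clause of $\varphi$ or derived from two earlier subspaces $A,B$ as any affine subspace $C\subseteq A\cup B$; tree-like if its derivation dag is a tree. $\mathrm{tree}_{Res(\oplus)}(\varphi)$ is the minimum size of a tree-like $Res(\oplus)$ refutation. *)

From Stdlib Require Import ClassicalEpsilon.
From mathcomp Require Import all_boot.
Set Implicit Arguments. Unset Strict Implicit. Unset Printing Implicit Defensive.

(* A literal (v, b) stands for z_v^b : z_v^true = z_v, z_v^false = ~ z_v. *)
Definition lit (V : finType) := (V * bool)%type.
Definition clause (V : finType) := {set lit V}.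
Definition cnf (V : finType) := {set clause V}.
Definition assign (V : finType) := {ffun V -> bool}.

Definition sat_lit (V : finType) (a : assign V) (l : lit V) : bool := a l.1 == l.2.
Definition sat_clause (V : finType) (a : assign V) (C : clause V) : bool :=
  [exists l in C, sat_lit a l].
Definition unsat (V : finType) (phi : cnf V) : Prop :=
  ~ exists a : assign V, forall C, C \in phi -> sat_clause a C.
Definition is_kCNF (V : finType) (k : nat) (phi : cnf V) : Prop :=
  forall C, C \in phi -> #|C| <= k.

(* minimum of a set of naturals (0 by convention if empty; never used so) *)
Definition pbool (P : Prop) : bool :=
  if excluded_middle_informative P then true else false.
Lemma pboolP (P : nat -> Prop) : (exists n, P n) -> exists n, pbool (P n).
Proof. by case=> n Hn; exists n; rewrite /pbool; case: excluded_middle_informative. Qed.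
Definition nat_min (P : nat -> Prop) : nat :=
  match excluded_middle_informative (exists n, P n) with
  | left H => ex_minn (pboolP H)
  | right _ => 0
  end.

Definition resolvent (V : finType) (C1 C2 : clause V) (v : V) : clause V :=
  (C1 :\ (v, true)) :|: (C2 :\ (v, false)).

Inductive res_tree (V : finType) (phi : cnf V) : clause V -> nat -> Prop :=
| rt_ax C : C \in phi -> res_tree phi C 1
| rt_res C1 C2 s1 s2 v :
    res_tree phi C1 s1 -> res_tree phi C2 s2 ->
    (v, true) \in C1 -> (v, false) \in C2 ->
    res_tree phi (resolvent C1 C2 v) (s1 + s2).+1.

Definition tree_Res (V : finType) (phi : cnf V) : nat :=
  nat_min (fun s => res_tree phi set0 s).

Definition res_refutation (V : finType) (phi : cnf V) (pi : seq (clause V)) : Prop :=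
  [/\ pi != [::], last set0 pi = set0 &
      forall j, j < size pi ->
        nth set0 pi j \in phi \/
        exists C1 C2 v, [/\ C1 \in take j pi, C2 \in take j pi,
                           (v, true) \in C1, (v, false) \in C2 &
                           nth set0 pi j = resolvent C1 C2 v]].

Definition width (V : finType) (pi : seq (clause V)) : nat := \max_(C <- pi) #|C|.

Definition width_Res (V : finType) (phi : cnf V) : nat :=
  nat_min (fun w => exists pi, res_refutation phi pi /\ width pi = w).

Definition xorf (V : finType) (u w : assign V) : assign V := [ffun v => u v (+) w v].
Definition is_linsub (V : finType) (W : {set assign V}) : Prop :=
  [ffun=> false] \in W /\ forall u w, u \in W -> w \in W -> xorf u w \in W.
Definition is_affine (V : finType) (S : {set assign V}) : Prop :=
  S = set0 \/ exists (a : assign V) (W : {set assign V}),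
                is_linsub W /\ S = [set xorf a w | w in W].

Definition falsif (V : finType) (C : clause V) : {set assign V} :=
  [set a : assign V | [forall l in C, ~~ sat_lit a l]].

Inductive xtree (V : finType) (phi : cnf V) : {set assign V} -> nat -> Prop :=
| xt_ax C : C \in phi -> xtree phi (falsif C) 1
| xt_der A B C sA sB :
    xtree phi A sA -> xtree phi B sB -> is_affine C -> C \subset A :|: B ->
    xtree phi C (sA + sB).+1.

Definition tree_ResX (V : finType) (phi : cnf V) : nat :=
  nat_min (fun s => xtree phi setT s).

(* inl (i, j') is x_{i,j'} (j' < ell), inr (i, j) is y_{i,j} (j < m) *)
Definition lvar (N ell : nat) : finType := (('I_N * 'I_ell) + ('I_N * 'I_(2 ^ ell)))%type.

Definition bit (j j' : nat) : bool := odd (j %/ 2 ^ j').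

(* literals of "x_{i,*} encodes j -> y_{i,j}^b" for l = (i, b) *)
Definition lift_lit (N ell : nat) (l : lit 'I_N) (j : 'I_(2 ^ ell)) : clause (lvar N ell) :=
  ((inr (l.1, j) : lvar N ell), l.2)
    |: [set ((inl (l.1, j') : lvar N ell), ~~ bit j j') | j' : 'I_ell].

Definition liftC (N ell : nat) (C : clause 'I_N) (f : {ffun lit 'I_N -> 'I_(2 ^ ell)})
  : clause (lvar N ell) := \bigcup_(l in C) lift_lit l (f l).

Definition liftIND (N ell : nat) (phi : cnf 'I_N) : cnf (lvar N ell) :=
  \bigcup_(C in phi) [set liftC C f | f : {ffun lit 'I_N -> 'I_(2 ^ ell)}].
Arguments liftIND {N} ell phi.

(* Width: following Ben-Sasson and Wigderson, the root of a tree-like refutation of size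
   s < 2 ^ (c + 1) resolves two unit clauses z and ~z.  The smaller subtree, restricted by
   ~z, refutes phi|~z in width k + c - 1 (induction on c); weakened back, it derives z in
   width k + c.  The larger subtree, restricted by z, refutes phi|z in width k + c
   (induction on the number of variables), and resolving its clauses with z turns it into
   a refutation of phi.

   Lifting: a tree-like Res(+) refutation of phi o IND is walked from the root, keeping a
   partial assignment rho to the variables of phi and an xor-closed set X of assignments
   inside the current node, on which the gadget of every block fixed by rho outputs rho's
   value and which realizes every assignment of the free blocks.  At a node whose premises
   A and B cover the node, either one of them still realizes all free assignments, or, as
   two proper affine subspaces covering a space are complementary hyperplanes, flipping
   some free variable u exchanges them.  Pinning the other variables of the block i of u
   makes its gadget constant, so both premises can be followed, with z_i set to 0 and 1
   respectively; the two resolution trees found below are joined by resolving on z_i.  At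
   a leaf the lifted clause is false on X, which forces its clause to be false under rho. *)

From Stdlib Require Import ClassicalEpsilon Classical.
From mathcomp Require Import all_boot zify.
Set Implicit Arguments. Unset Strict Implicit. Unset Printing Implicit Defensive.

(** * Binary pointers and lifted clauses *)

Lemma bit_0 j : bit j 0 = odd j.
Proof. by rewrite /bit expn0 divn1. Qed.

Lemma bit_S j j' : bit j j'.+1 = bit j./2 j'.
Proof. by rewrite /bit expnS divnMA divn2. Qed.

Lemma bit_surj ell (b : nat -> bool) :
  exists2 j, j < 2 ^ ell & forall j', j' < ell -> bit j j' = b j'.
Proof.
elim: ell b => [|ell IH] b; first by exists 0.
have [j lt_j Hj] := IH (fun j' => b j'.+1).
exists (b 0 + j.*2); first by rewrite expnS; move: lt_j; case: (b 0) => /=; lia.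
case=> [|j'] lt_j'; first by rewrite bit_0 oddD odd_double addbF; case: (b 0).
by rewrite bit_S half_bit_double; apply: Hj.
Qed.

Lemma bit_inj ell j1 j2 : j1 < 2 ^ ell -> j2 < 2 ^ ell ->
  (forall j', j' < ell -> bit j1 j' = bit j2 j') -> j1 = j2.
Proof.
elim: ell j1 j2 => [|ell IH] j1 j2; first by rewrite expn0 !ltnS !leqn0 => /eqP-> /eqP->.
move=> lt_j1 lt_j2 Ebit.
have Eodd : odd j1 = odd j2 by rewrite -!bit_0; apply: Ebit.
have Ehalf : j1./2 = j2./2.
  apply: IH; try by rewrite -divn2 ltn_divLR // -expnSr.
  by move=> j' lt_j'; rewrite -!bit_S; apply: Ebit.
by rewrite -(odd_double_half j1) -(odd_double_half j2) Eodd Ehalf.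
Qed.

Lemma exp2_gt0 ell : 0 < 2 ^ ell. Proof. by rewrite expn_gt0. Qed.

Definition ord0_exp2 ell : 'I_(2 ^ ell) := Ordinal (exp2_gt0 ell).

Lemma leq_card_bigcup (I T : finType) (P : pred I) (F : I -> {set T}) :
  #|\bigcup_(i | P i) F i| <= \sum_(i | P i) #|F i|.
Proof.
elim/big_rec2: _ => [|i n X _ IH]; first by rewrite cards0.
by apply: leq_trans (leq_card_setU _ _).1 _; rewrite leq_add2l.
Qed.

Section LiftedClauses.
Variables N ell : nat.
Notation V := (lvar N ell).
Notation pointer := {ffun lit 'I_N -> 'I_(2 ^ ell)}.
Implicit Types (C : clause 'I_N) (f g : pointer).

Lemma card_lift_lit (l : lit 'I_N) (j : 'I_(2 ^ ell)) : #|lift_lit l j| <= ell.+1.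
Proof.
rewrite /lift_lit cardsU1 -[ell.+1]add1n; apply: leq_add; first by case: (_ \notin _).
by apply: leq_trans (leq_imset_card _ _) _; rewrite card_ord.
Qed.

Lemma card_liftC C f : #|liftC C f| <= #|C| * ell.+1.
Proof.
apply: leq_trans (leq_card_bigcup _ _) _.
by rewrite -sum_nat_const; apply: leq_sum => l _; apply: card_lift_lit.
Qed.

Lemma liftC_y C f l : l \in C -> ((inr (l.1, f l) : V), l.2) \in liftC C f.
Proof. by move=> lC; apply/bigcupP; exists l => //; rewrite /lift_lit setU11. Qed.

Lemma liftC_x C f l (j' : 'I_ell) : l \in C ->
  ((inl (l.1, j') : V), ~~ bit (f l) j') \in liftC C f.
Proof.
by move=> lC; apply/bigcupP; exists l => //; apply/setU1P; right; apply/imsetP; exists j'.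
Qed.

Lemma liftC_yP C f i j b :
  ((inr (i, j) : V), b) \in liftC C f -> (i, b) \in C /\ f (i, b) = j.
Proof.
case/bigcupP=> [[i' b'] lC]; rewrite /lift_lit => /setU1P [[-> -> ->]|] //.
by case/imsetP.
Qed.

Lemma liftC_inj C C' f g : liftC C f = liftC C' g -> C = C' /\ {in C, f =1 g}.
Proof.
move=> E.
have sub_g : {in C, forall l, l \in C' /\ g l = f l}.
  by move=> [i b] lC; have := liftC_y f lC; rewrite E => /liftC_yP.
have sub_f : {subset C' <= C}.
  by move=> [i b] lC; have := liftC_y g lC; rewrite -E => /liftC_yP [].
split; last by move=> l /sub_g [_ ->].
by apply/setP=> l; apply/idP/idP => [/sub_g []|/sub_f].
Qed.

Lemma liftC_supp C f :
  liftC C f = liftC C [ffun l => if l \in C then f l else ord0_exp2 ell].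
Proof. by apply: eq_bigr => l lC; rewrite ffunE lC. Qed.

Lemma card_liftC_set C : #|[set liftC C f | f : pointer]| = (2 ^ ell) ^ #|C|.
Proof.
have -> : [set liftC C f | f : pointer] =
          [set liftC C f | f in pffun_on (ord0_exp2 ell) C predT].
  apply/setP=> D; apply/imsetP/imsetP => [[f _ ->]|[f _ ->]]; last by exists f.
  exists [ffun l => if l \in C then f l else ord0_exp2 ell]; last exact: liftC_supp.
  by apply/pffun_onP; split => //; apply/supportP => l lC; rewrite ffunE (negbTE lC).
rewrite card_in_imset ?card_pffun_on ?card_ord //.
move=> f g /pffun_onP [/supportP f0 _] /pffun_onP [/supportP g0 _] /liftC_inj [_ Efg].
by apply/ffunP => l; case: (boolP (l \in C)) => lC; [apply: Efg | rewrite f0 ?g0].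
Qed.

Lemma card_liftIND (phi : cnf 'I_N) :
  #|liftIND ell phi| = \sum_(C in phi) (2 ^ ell) ^ #|C|.
Proof.
rewrite /liftIND big_mkcond /= -sum1_card (partition_disjoint_bigcup addn (fun=> 1)).
  rewrite [RHS]big_mkcond; apply: eq_bigr => C _.
  by case: (C \in phi); rewrite ?big_set0 // sum1_card card_liftC_set.
move=> C C' neqCC'; rewrite -setI_eq0.
case: (C \in phi); case: (C' \in phi); rewrite ?set0I ?setI0 //.
apply/eqP/setP => D; rewrite !inE; apply/negbTE/negP.
case/andP=> /imsetP [f _ ->] /imsetP [g _] /liftC_inj [ECC' _].
by rewrite ECC' eqxx in neqCC'.
Qed.

Lemma kCNF_liftIND k (phi : cnf 'I_N) :
  is_kCNF k phi -> is_kCNF (k * (ell + 1)) (liftIND ell phi).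
Proof.
move=> kphi D /bigcupP [C Cphi /imsetP [f _ ->]].
by apply: leq_trans (card_liftC C f) _; rewrite addn1 leq_mul2r kphi ?orbT.
Qed.

Lemma card_liftIND_le k (phi : cnf 'I_N) :
  is_kCNF k phi -> #|liftIND ell phi| <= (2 ^ ell) ^ k * #|phi|.
Proof.
move=> kphi; rewrite card_liftIND mulnC -sum_nat_const; apply: leq_sum => C CF.
by rewrite leq_pexp2l ?exp2_gt0 ?kphi.
Qed.

Lemma card_liftIND_eq k (phi : cnf 'I_N) : (forall C, C \in phi -> #|C| = k) ->
  #|liftIND ell phi| = (2 ^ ell) ^ k * #|phi|.
Proof.
by move=> cardC; rewrite card_liftIND mulnC -sum_nat_const; apply: eq_bigr => C /cardC ->.
Qed.

Lemma card_lvar : #|{: V}| = N * (ell + 2 ^ ell).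
Proof. by rewrite card_sum !card_prod !card_ord mulnDr. Qed.

Definition encodes (x : assign V) (i : 'I_N) (j : 'I_(2 ^ ell)) :=
  forall j' : 'I_ell, x (inl (i, j')) = bit j j'.

Lemma falsif_liftC C f x l : x \in falsif (liftC C f) -> l \in C ->
  encodes x l.1 (f l) /\ x (inr (l.1, f l)) = ~~ l.2.
Proof.
rewrite inE => /forall_inP x_fals lC; split.
  by move=> j'; have := x_fals _ (liftC_x f j' lC); rewrite /sat_lit /=; case: (x _); case: bit.
by have := x_fals _ (liftC_y f lC); rewrite /sat_lit /=; case: (x _); case: l.2.
Qed.

Lemma liftIND_unsat (phi : cnf 'I_N) : unsat phi -> unsat (liftIND ell phi).
Proof.
move=> unsat_phi [a sat_a]; apply: unsat_phi.
have dec i : exists j : 'I_(2 ^ ell), [forall j' : 'I_ell, a (inl (i, j')) == bit j j'].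
  pose b j' := if insub j' is Some o then a (inl (i, o)) else false.
  have [j lt_j Ej] := bit_surj ell b; exists (Ordinal lt_j); apply/forallP => j' /=.
  by rewrite Ej ?ltn_ord // /b valK.
pose d i := xchoose (dec i).
have d_enc i : encodes a i (d i) by move=> j'; apply/eqP/(forallP (xchooseP (dec i))).
exists [ffun i => a (inr (i, d i))] => C CF.
have /exists_inP [l' /bigcupP [l lC]] : sat_clause a (liftC C [ffun l => d l.1]).
  by apply: sat_a; apply/bigcupP; exists C => //; apply/imsetP; exists [ffun l => d l.1].
rewrite ffunE => /setU1P [-> sat_y|/imsetP [j' _ ->]].
  by apply/exists_inP; exists l; rewrite // /sat_lit ffunE.
by rewrite /sat_lit /= d_enc; case: bit.
Qed.

End LiftedClauses.

(** * Tree-like resolution: size against width *)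

Lemma nat_min_le (P : nat -> Prop) n : P n -> nat_min P <= n.
Proof.
move=> Pn; rewrite /nat_min; case: excluded_middle_informative => [ex|] //.
case: ex_minnP => m _; apply; rewrite /pbool; by case: excluded_middle_informative.
Qed.

Lemma nat_minP (P : nat -> Prop) : (exists n, P n) -> P (nat_min P).
Proof.
move=> ex; rewrite /nat_min; case: excluded_middle_informative => [{}ex|//].
by case: ex_minnP => m; rewrite /pbool; case: excluded_middle_informative.
Qed.

Section Resolution.
Variable V : finType.
Implicit Types (F : cnf V) (C D : clause V) (q : lit V).

Lemma resolventS C1 C2 D1 D2 v : D1 \subset C1 -> D2 \subset C2 ->
  resolvent D1 D2 v \subset resolvent C1 C2 v.
Proof. by move=> sD1 sD2; apply: setUSS; apply: setSD. Qed.

Lemma resolvent_setD1 C1 C2 v l :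
  resolvent (C1 :\ l) (C2 :\ l) v = resolvent C1 C2 v :\ l.
Proof. by apply/setP => x; rewrite !inE; case: (x == l); rewrite /= ?andbF. Qed.

Lemma rt_size_gt0 F C s : res_tree F C s -> 0 < s.
Proof. by case. Qed.

Definition rt_weak F C (s : nat) :=
  exists2 D : clause V, D \subset C & exists2 s', res_tree F D s' & s' <= s.

Lemma rt_weakW F C s : res_tree F C s -> rt_weak F C s.
Proof. by move=> T; exists C => //; exists s. Qed.

Lemma rt_weakS F C C' s s' :
  rt_weak F C s -> C \subset C' -> s <= s' -> rt_weak F C' s'.
Proof.
move=> [D sD [t T le_t]] sC le_s; exists D; first exact: subset_trans sC.
by exists t => //; apply: leq_trans le_s.
Qed.

Lemma rt_weak0 F s : rt_weak F set0 s -> exists2 s', res_tree F set0 s' & s' <= s.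
Proof. by case=> D; rewrite subset0 => /eqP ->. Qed.

Lemma rt_weak_res F C1 C2 s1 s2 v :
  rt_weak F C1 s1 -> rt_weak F C2 s2 -> rt_weak F (resolvent C1 C2 v) (s1 + s2).+1.
Proof.
move=> [D1 sD1 [t1 T1 le_t1]] [D2 sD2 [t2 T2 le_t2]].
have [vD1|nvD1] := boolP ((v, true) \in D1); last first.
  apply: rt_weakS (rt_weakW T1) _ _; last by lia.
  by apply: subset_trans (subsetUl _ _); rewrite subsetD1 sD1.
have [vD2|nvD2] := boolP ((v, false) \in D2); last first.
  apply: rt_weakS (rt_weakW T2) _ _; last by lia.
  by apply: subset_trans (subsetUr _ _); rewrite subsetD1 sD2.
exists (resolvent D1 D2 v); first exact: resolventS.
by exists (t1 + t2).+1; [apply: rt_res | lia].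
Qed.

Lemma res_tree_refutation_split F s : res_tree F set0 s -> set0 \in F \/
  exists v s1 s2, [/\ res_tree F [set (v, true)] s1, res_tree F [set (v, false)] s2
                    & s = (s1 + s2).+1].
Proof.
move E: set0 => C T; case: T E => [D DF _|C1 C2 s1 s2 v T1 T2 vC1 vC2]; first by left.
move/eqP; rewrite eq_sym setU_eq0 => /andP [/eqP C1v /eqP C2v].
by right; exists v, s1, s2; rewrite -(setD1K vC1) -(setD1K vC2) C1v C2v !setU0 in T1 T2.
Qed.

Definition lneg q : lit V := (q.1, ~~ q.2).

Lemma lnegK : involutive lneg.
Proof. by case=> x b; rewrite /lneg /= negbK. Qed.

Lemma lneg_neq q : lneg q != q.
Proof. by case: q => x b; rewrite /lneg xpair_eqE eqxx /=; case: b. Qed.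

Definition restrict F q : cnf V := [set C :\ lneg q | C in F & q \notin C].

Definition vars F : {set V} := [set v | [exists C in F, [exists b, (v, b) \in C]]].

Lemma rt_vars F C s v b : res_tree F C s -> (v, b) \in C -> v \in vars F.
Proof.
move=> T; elim: T b => [D DF|C1 C2 s1 s2 u _ IH1 _ IH2 _ _] b.
  by move=> vD; rewrite inE; apply/exists_inP; exists D => //; apply/existsP; exists b.
by case/setUP => /setD1P [_]; [apply: IH1 | apply: IH2].
Qed.

Lemma vars_restrict F q : vars (restrict F q) \subset vars F :\ q.1.
Proof.
apply/subsetP => v; rewrite !inE => /exists_inP [D /imsetP [C /setIdP [CF qC] ->]].
case/existsP=> b; rewrite !inE => /andP [neq_vb vbC]; apply/andP; split.
  apply: contraNneq qC => ev; suff -> : q = (v, b) by [].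
  by move: neq_vb; rewrite ev /lneg xpair_eqE eqxx /=; case: q {ev} => x [] /=; case: (b) => /=.
by apply/exists_inP; exists C => //; apply/existsP; exists b.
Qed.

Lemma kCNF_restrict k F q : is_kCNF k F -> is_kCNF k (restrict F q).
Proof.
move=> kF D /imsetP [C /setIdP [CF _] ->].
by apply: leq_trans (kF _ CF); apply: subset_leq_card; apply: subD1set.
Qed.

Lemma rt_restrict F q C s : res_tree F C s ->
  q \in C \/ rt_weak (restrict F q) (C :\ lneg q) s.
Proof.
elim=> [D DF | C1 C2 s1 s2 v _ IH1 _ IH2 _ _].
  have [qD|nqD] := boolP (q \in D); [by left | right].
  by apply/rt_weakW/rt_ax/imsetP; exists D; rewrite // inE DF.
set R := resolvent C1 C2 v.
have memR1 : q \in C1 -> q != (v, true) -> q \in R by rewrite /R !inE => -> ->.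
have memR2 : q \in C2 -> q != (v, false) -> q \in R by rewrite /R !inE => -> -> /[!orbT].
have subR1 : C1 :\ (v, true) \subset R :\ (v, true).
  by apply/subsetP => x; rewrite /R !inE => /andP [-> ->].
have subR2 : C2 :\ (v, false) \subset R :\ (v, false).
  by apply/subsetP => x; rewrite /R !inE => /andP [-> ->]; rewrite orbT.
case: IH1 => [qC1|W1]; case: IH2 => [qC2|W2].
- have [Eq|ne] := eqVneq q (v, true); last by left; exact: memR1 qC1 ne.
  by left; apply: memR2 qC2 _; rewrite Eq xpair_eqE eqxx.
- have [Eq|ne] := eqVneq q (v, true); last by left; exact: memR1 qC1 ne.
  by right; rewrite Eq in W2 *; apply: rt_weakS W2 subR2 _; lia.
- have [Eq|ne] := eqVneq q (v, false); last by left; exact: memR2 qC2 ne.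
  by right; rewrite Eq in W1 *; apply: rt_weakS W1 subR1 _; lia.
- by right; rewrite /R -resolvent_setD1; apply: rt_weak_res.
Qed.

Lemma rt_restrict_unit F q s :
  res_tree F [set q] s -> rt_weak (restrict F (lneg q)) set0 s.
Proof.
case/(rt_restrict (lneg q)) => [|]; first by rewrite inE (negbTE (lneg_neq q)).
by rewrite lnegK setDv.
Qed.

Inductive wderiv F (w : nat) : clause V -> Prop :=
| wd_ax C : C \in F -> #|C| <= w -> wderiv F w C
| wd_res C1 C2 v : wderiv F w C1 -> wderiv F w C2 -> (v, true) \in C1 ->
    (v, false) \in C2 -> #|resolvent C1 C2 v| <= w -> wderiv F w (resolvent C1 C2 v).

Lemma wderiv_width F w C : wderiv F w C -> #|C| <= w.
Proof. by case. Qed.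

Lemma wderiv_lift_restrict F q w D : wderiv (restrict F q) w D ->
  exists D', [/\ D \subset D', D' \subset lneg q |: D & wderiv F w.+1 D'].
Proof.
elim=> [_ /imsetP [C /setIdP [CF qC] ->] wC|
         D1 D2 v _ [E1 [sD1 sE1 W1]] _ [E2 [sD2 sE2 W2]] vD1 vD2 wR].
  exists C; split; first exact: subD1set.
    by apply/subsetP => x xC; rewrite !inE xC andbT; case: eqP.
  by apply: wd_ax; rewrite // (cardsD1 (lneg q)) -add1n leq_add ?leq_b1.
have sR : resolvent E1 E2 v \subset lneg q |: resolvent D1 D2 v.
  apply/subsetP => x; rewrite !inE => /orP [] /andP [nx xE].
    by move: (subsetP sE1 x xE); rewrite !inE => /orP [-> //|->]; rewrite nx orbT.
  by move: (subsetP sE2 x xE); rewrite !inE => /orP [-> //|->]; rewrite nx !orbT.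
exists (resolvent E1 E2 v); split => //; first exact: resolventS.
apply: wd_res; [by [] | by [] | exact: subsetP sD1 _ _ | exact: subsetP sD2 _ _ |].
apply: leq_trans (subset_leq_card sR) _.
by rewrite cardsU1 -add1n leq_add ?leq_b1.
Qed.

Lemma wderiv_unit_res F w q C : wderiv F w [set q] -> wderiv F w C ->
  lneg q \in C -> wderiv F w (C :\ lneg q).
Proof.
move=> Wq WC nqC; have wC := wderiv_width WC.
have wCq : #|C :\ lneg q| <= w by apply: leq_trans wC; apply/subset_leq_card/subD1set.
case: q Wq nqC wCq => x [] Wq nqC wCq.
  have ER : C :\ lneg (x, true) = resolvent [set (x, true)] C x.
    by rewrite /resolvent setDv set0U.
  by rewrite ER; apply: wd_res; rewrite -?ER ?set11.
have ER : C :\ lneg (x, false) = resolvent C [set (x, false)] x.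
  by rewrite /resolvent setDv setU0.
by rewrite ER; apply: wd_res; rewrite -?ER ?set11.
Qed.

Lemma wderiv_unrestrict k F q w E : is_kCNF k F -> k <= w ->
  wderiv F w [set q] -> wderiv (restrict F q) w E -> wderiv F w E.
Proof.
move=> kF le_kw Wq; elim=> [_ /imsetP [C /setIdP [CF qC] ->] _|D1 D2 v _ W1 _ W2]; last first.
  exact: wd_res.
have WC : wderiv F w C by apply: wd_ax; rewrite // (leq_trans (kF _ CF)).
have [nqC|nqC] := boolP (lneg q \in C); first exact: wderiv_unit_res.
suff -> : C :\ lneg q = C by [].
by apply/setP => y; rewrite !inE; case: eqP => // ->; rewrite (negbTE nqC).
Qed.

Lemma wderiv_refutation_split k F q w : is_kCNF k F -> k <= w.+1 ->
  wderiv (restrict F (lneg q)) w set0 -> wderiv (restrict F q) w.+1 set0 ->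
  wderiv F w.+1 set0.
Proof.
move=> kF le_kw /wderiv_lift_restrict [D [_ sD WD]] Wq.
move: sD; rewrite lnegK setU0 subset1 => /orP [] /eqP ED; rewrite ED in WD => //.
exact: wderiv_unrestrict kF le_kw WD Wq.
Qed.

Lemma wderiv_of_tree_refutation k c : forall n F s, #|vars F| < n -> is_kCNF k F ->
  s < 2 ^ c.+1 -> res_tree F set0 s -> wderiv F (k + c) set0.
Proof.
have wd0 F w : set0 \in F -> wderiv F w set0 by move=> F0; apply: wd_ax; rewrite ?cards0.
elim: c => [|c IHc] n F s.
  move=> _ _ lt_s /res_tree_refutation_split [/wd0 //|[v [s1 [s2 [T1 T2 Es]]]]].
  by move: (rt_size_gt0 T1) (rt_size_gt0 T2) lt_s; rewrite Es expn1; lia.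
elim: n F s => [//|n IHn] F s ltFn kF lt_s.
case/res_tree_refutation_split => [/wd0 //|[v [s1 [s2 [T1 T2 Es]]]]].
have split_on q sq sq' : res_tree F [set q] sq -> res_tree F [set lneg q] sq' ->
    sq < 2 ^ c.+1 -> sq' < 2 ^ c.+2 -> wderiv F (k + c.+1) set0.
  move=> Tq Tq' lt_sq lt_sq'.
  have [t Tt le_t] := rt_weak0 (rt_restrict_unit Tq).
  have [t' Tt' le_t'] := rt_weak0 (rt_restrict_unit Tq'); rewrite lnegK in Tt'.
  have qF : q.1 \in vars F by apply: (rt_vars (b := q.2) Tq); rewrite -surjective_pairing set11.
  have ltF' : #|vars (restrict F (lneg q))| < n.+1.
    apply: leq_ltn_trans ltFn.
    exact/subset_leq_card/(subset_trans (vars_restrict _ _))/subD1set.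
  have ltF : #|vars (restrict F q)| < n.
    have := subset_leq_card (vars_restrict F q).
    by move: ltFn; rewrite (cardsD1 q.1 (vars F)) qF; lia.
  rewrite addnS; apply: (wderiv_refutation_split (q := q) kF); first by lia.
    by apply: IHc _ _ _ ltF' (kCNF_restrict kF) _ Tt; lia.
  by rewrite -addnS; apply: IHn _ _ ltF (kCNF_restrict kF) _ Tt'; lia.
have [lt_s1|le_s1] := ltnP s1 (2 ^ c.+1).
  by apply: split_on T1 T2 lt_s1 _; move: lt_s; rewrite Es (expnS 2 c.+1); lia.
by apply: split_on T2 T1 _ _; move: lt_s; rewrite Es (expnS 2 c.+1); lia.
Qed.


Definition res_steps F (pi : seq (clause V)) := forall j, j < size pi ->
  nth set0 pi j \in F \/
  exists C1 C2 v, [/\ C1 \in take j pi, C2 \in take j pi,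
                     (v, true) \in C1, (v, false) \in C2 &
                     nth set0 pi j = resolvent C1 C2 v].

Lemma res_steps_cat F pi1 pi2 :
  res_steps F pi1 -> res_steps F pi2 -> res_steps F (pi1 ++ pi2).
Proof.
move=> S1 S2 j; rewrite size_cat nth_cat => lt_j.
have [lt_j1|le_j1] := ltnP j (size pi1); first by rewrite take_cat lt_j1; apply: S1.
rewrite take_cat ltnNge le_j1 /=.
have [->|[C1 [C2 [v [C1pi C2pi vC1 vC2 ->]]]]] := S2 (j - size pi1) ltac:(lia); first by left.
by right; exists C1, C2, v; rewrite !mem_cat C1pi C2pi !orbT.
Qed.

Lemma res_steps_rcons F pi R : res_steps F pi ->
  R \in F \/ (exists C1 C2 v, [/\ C1 \in pi, C2 \in pi, (v, true) \in C1,
                                 (v, false) \in C2 & R = resolvent C1 C2 v]) ->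
  res_steps F (rcons pi R).
Proof.
move=> S HR j; rewrite size_rcons ltnS leq_eqVlt => /orP [/eqP ->|lt_j].
  by rewrite nth_rcons ltnn eqxx -cats1 take_size_cat.
by rewrite nth_rcons lt_j -cats1 take_cat lt_j; apply: S.
Qed.

Lemma last_in (T : eqType) (x0 : T) s : s != [::] -> last x0 s \in s.
Proof. by case: s => // x s _; apply: (mem_last x s). Qed.

Lemma wderiv_seq F w C : wderiv F w C -> exists pi,
  [/\ pi != [::], last set0 pi = C, res_steps F pi & {in pi, forall D, #|D| <= w}].
Proof.
elim=> [D DF wD|C1 C2 v _ [p1 [n1 l1 S1 W1]] _ [p2 [n2 l2 S2 W2]] vC1 vC2 wR].
  exists [:: D]; split => //; first by case=> // _; left.
  by move=> E; rewrite inE => /eqP ->.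
exists (rcons (p1 ++ p2) (resolvent C1 C2 v)); split.
- by rewrite -cats1; case: (p1) n1.
- by rewrite last_rcons.
- have C1p1 : C1 \in p1 by rewrite -l1 last_in.
  have C2p2 : C2 \in p2 by rewrite -l2 last_in.
  apply: res_steps_rcons (res_steps_cat S1 S2) _; right; exists C1, C2, v.
  by rewrite !mem_cat C1p1 C2p2 orbT.
- by move=> D; rewrite mem_rcons inE mem_cat => /orP [/eqP ->|/orP [/W1|/W2]].
Qed.

Lemma width_Res_le F w : wderiv F w set0 -> width_Res F <= w.
Proof.
case/wderiv_seq => pi [pi0 last0 S W]; apply: (@leq_trans (width pi)).
  by apply: nat_min_le; exists pi.
by apply/bigmax_leqP_seq => D Dpi _; apply: W.
Qed.

Lemma exp_width_Res_le_tree k F s : is_kCNF k F -> res_tree F set0 s ->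
  2 ^ (width_Res F - k) <= s.
Proof.
move=> kF T; have s_gt0 := rt_size_gt0 T.
have W := wderiv_of_tree_refutation (ltnSn _) kF (trunc_log_ltn s (isT : 1 < 2)) T.
apply: leq_trans (trunc_logP (isT : 1 < 2) s_gt0); apply: leq_pexp2l => //.
by have := width_Res_le W; lia.
Qed.

End Resolution.

(** * Xor-closed sets of assignments *)

Ltac bool_ffun := apply/ffunP => ?; rewrite !ffunE;
  repeat match goal with |- context [fun_of_fin ?f ?v] => case: (fun_of_fin f v) end.

Section AffineSets.
Variable T : finType.
Notation A := (assign T).
Implicit Types (t w x y z d : A) (X Y : {set A}) (S : {set T}) (u : T) (P Q : A -> Prop).

Definition xor3_closed P := forall x y z, P x -> P y -> P z -> P (xorf x (xorf y z)).

Lemma xor3_closedI X Y : xor3_closed [in X] -> xor3_closed [in Y] -> xor3_closed [in X :&: Y].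
Proof.
move=> cX cY x y z; rewrite !inE => /andP [? ?] /andP [? ?] /andP [? ?].
by rewrite cX ?cY.
Qed.

Lemma xor3_closed_falsif (C : clause T) : xor3_closed [in falsif C].
Proof.
move=> x y z; rewrite !inE => /forall_inP Hx /forall_inP Hy /forall_inP Hz.
apply/forall_inP => l lC; move: (Hx l lC) (Hy l lC) (Hz l lC); rewrite /sat_lit !ffunE.
by case: (x l.1); case: (y l.1); case: (z l.1); case: l.2.
Qed.

Lemma xor3_closed_affine X : is_affine X -> xor3_closed [in X].
Proof.
case=> [->|[a [W [[_ WX] ->]]]]; first by move=> x; rewrite inE.
move=> _ _ _ /imsetP [w1 w1W ->] /imsetP [w2 w2W ->] /imsetP [w3 w3W ->].
by apply/imsetP; exists (xorf w1 (xorf w2 w3)); [apply/WX/WX | bool_ffun].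
Qed.

Lemma xtree_xor3_closed (phi : cnf T) Y s : xtree phi Y s -> xor3_closed [in Y].
Proof. by case=> [C _|B B' C sB sB' _ _ /xor3_closed_affine]; first exact: xor3_closed_falsif. Qed.

Definition unit_assign (u : T) : A := [ffun v => v == u].
Definition flip u t := xorf t (unit_assign u).

Lemma flip_invariant_shift P : (forall u t, P (flip u t) <-> P t) ->
  forall d t, P (xorf t d) <-> P t.
Proof.
move=> Pflip d; have [n] := ubnP #|[set v | d v]|; elim: n d => // n IH d lt_dn t.
have [u du|d0] := pickP d; last first.
  have -> : xorf t d = t by apply/ffunP => v; rewrite ffunE d0 addbF.
  by [].
have -> : xorf t d = flip u (xorf t (flip u d)).
  by rewrite /flip; bool_ffun; case: eqP => // ->; rewrite du.
rewrite Pflip; apply: IH; move: lt_dn; rewrite (cardsD1 u) inE du add1n ltnS.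
apply: leq_trans; apply: subset_leq_card; apply/subsetP => v; rewrite !inE !ffunE.
by case: eqP => [->|_]; rewrite ?du ?addbF // andbT.
Qed.

Section Hyperplane.
Variables P Q : A -> Prop.
Hypotheses (P3 : xor3_closed P) (Q3 : xor3_closed Q) (PQ : forall t, P t \/ Q t).
Hypotheses (nP : exists t, ~ P t) (nQ : exists t, ~ Q t).

Lemma xor3_cover_negating_shift : exists d, forall t, P (xorf t d) <-> ~ P t.
Proof.
have [x nPx] := nP; have [z nQz] := nQ.
have Pz : P z by case: (PQ z).
exists (xorf x z) => t; split => [Ptd Pt | nPt].
  by apply: nPx; have := P3 Pt Ptd Pz; congr P; bool_ffun.
apply: NNPP => nPtd; apply: nQz.
have Q_ t' : ~ P t' -> Q t' by case: (PQ t').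
by have := Q3 (Q_ _ nPt) (Q_ _ nPtd) (Q_ _ nPx); congr Q; bool_ffun.
Qed.

Lemma xor3_shift_dichotomy w :
  (forall t, P (xorf t w) <-> P t) \/ (forall t, P (xorf t w) <-> ~ P t).
Proof.
have [d Pd] := xor3_cover_negating_shift.
have [[t0 Pt0]|no_t0] := classic (exists t0, P (xorf t0 w) <-> P t0); [left|right]; last first.
  move=> t; split => [Ptw Pt|nPt]; first by apply: no_t0; exists t.
  by apply: NNPP => nPtw; apply: no_t0; exists t; split.
have [t1 [Pt1 Pt1w]] : exists t1, P t1 /\ P (xorf t1 w).
  have [Pt|nPt] := classic (P t0); first by exists t0; split => //; apply/Pt0.
  exists (xorf t0 d); split; first exact/Pd.
  have -> : xorf (xorf t0 d) w = xorf (xorf t0 w) d by bool_ffun.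
  by apply/Pd => /Pt0.
move=> t; split => Pt.
  by have := P3 Pt Pt1 Pt1w; congr P; bool_ffun.
by have := P3 Pt Pt1 Pt1w; congr P; bool_ffun.
Qed.

Lemma xor3_cover_flip (U : pred T) :
  (forall t t', {in U, t =1 t'} -> P t -> P t') ->
  exists2 u, U u & forall t, P (flip u t) <-> ~ P t.
Proof.
move=> Pdep; have [d Pd] := xor3_cover_negating_shift.
apply: NNPP => no_u.
suff /(_ d) Pd' : forall d t, P (xorf t d) <-> P t.
  by have [x nPx] := nP; have := Pd x; rewrite Pd'; tauto.
apply: flip_invariant_shift => u.
have [Uu|nUu] := boolP (U u); last first.
  have nvu v : U v -> (v == u) = false by move=> Uv; apply: contraNF nUu => /eqP <-.
  by move=> t; split; apply: Pdep => v Uv; rewrite !ffunE nvu ?addbF.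
have [//|neg_u] := xor3_shift_dichotomy (unit_assign u).
by exfalso; apply: no_u; exists u.
Qed.

End Hyperplane.

Definition subcube (a : A) (S : {set T}) : {set A} :=
  [set x : A | [forall v, (v \notin S) ==> (x v == a v)]].

Lemma subcube_affine (a : A) S : is_affine (subcube a S).
Proof.
right; exists a, [set w : A | [forall v, (v \notin S) ==> ~~ w v]]; split.
  split; first by rewrite inE; apply/forall_inP => v _; rewrite ffunE.
  move=> u w; rewrite !inE => /forall_inP Hu /forall_inP Hw; apply/forall_inP => v vS.
  by rewrite ffunE (negbTE (Hu v vS)) (negbTE (Hw v vS)).
apply/setP => x; rewrite inE; apply/forall_inP/imsetP => [Hx|[w]].
  exists (xorf a x); last by bool_ffun.
  by rewrite inE; apply/forall_inP => v vS; rewrite ffunE (eqP (Hx v vS)) addbb.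
by rewrite inE => /forall_inP Hw -> v vS; rewrite ffunE (negbTE (Hw v vS)) addbF.
Qed.

Lemma subcube0 a : subcube a set0 = [set a].
Proof.
apply/setP => x; rewrite !inE; apply/forall_inP/eqP => [Hx|-> //].
by apply/ffunP => v; apply/eqP; apply: Hx; rewrite inE.
Qed.

Lemma subcubeT a : subcube a setT = setT.
Proof. by apply/setP => x; rewrite !inE; apply/forall_inP => v; rewrite inE. Qed.

Lemma subcube_split (a : A) S u : u \in S ->
  subcube a S \subset subcube a (S :\ u) :|: subcube (flip u a) (S :\ u).
Proof.
move=> uS; apply/subsetP => x; rewrite !inE => /forall_inP Hx; apply/orP.
have [xu|xu] := eqVneq (x u) (a u); [left|right]; apply/forall_inP => v;
  rewrite in_setD1 negb_and negbK => /orP [/eqP ->|vS]; rewrite ?ffunE ?eqxx.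
- by rewrite xu.
- exact: Hx.
- by case: (x u) (a u) xu => [] [].
- by rewrite (_ : (v == u) = false) ?addbF; [apply: Hx | apply: contraNF vS => /eqP ->].
Qed.

Lemma xtree_subcube (phi : cnf T) S a : unsat phi -> exists s, xtree phi (subcube a S) s.
Proof.
move=> unsat_phi; move: {2}#|S| (erefl #|S|) => n; elim: n S a => [|n IH] S a cardS.
  have [C [CF aC]] : exists C, C \in phi /\ ~~ sat_clause a C.
    apply: NNPP => all_sat; apply: unsat_phi; exists a => C CF.
    by apply: NNPP => nC; apply: all_sat; exists C; split => //; apply/negP.
  exists 3; apply: (@xt_der _ _ (falsif C) (falsif C) _ 1 1); try exact: xt_ax.
    exact: subcube_affine.
  move/eqP: cardS; rewrite cards_eq0 => /eqP ->; rewrite subcube0 setUid sub1set inE.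
  by apply/forall_inP => l lC; apply: contraNN aC => sl; apply/exists_inP; exists l.
have [u uS] : exists u, u \in S by apply/set0Pn; rewrite -card_gt0 cardS.
have cardSu : #|S :\ u| = n by move: cardS; rewrite (cardsD1 u S) uS; lia.
have [s1 T1] := IH _ a cardSu; have [s2 T2] := IH _ (flip u a) cardSu.
by exists (s1 + s2).+1; apply: xt_der T1 T2 (subcube_affine _ _) (subcube_split _ uS).
Qed.

Lemma xtree_refutation (phi : cnf T) : unsat phi -> exists s, xtree phi setT s.
Proof. by move=> /(xtree_subcube setT [ffun=> false]); rewrite subcubeT. Qed.

End AffineSets.

(** * Tree-like Res(+) refutations of lifted formulas *)

Section LiftingGame.
Variables (N ell : nat) (phi : cnf 'I_N).
Hypothesis ell_gt0 : 0 < ell.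
Notation V := (lvar N ell).
Notation A := (assign V).
Notation m := (2 ^ ell).
Notation restriction := {ffun 'I_N -> option bool}.
Implicit Types (C : clause 'I_N) (f : {ffun lit 'I_N -> 'I_m}) (rho : restriction).
Implicit Types (u v : V) (x t : A) (X Y YA YB R : {set A}).

Definition block v : 'I_N := match v with inl p => p.1 | inr p => p.1 end.

Definition realizes rho X t :=
  exists2 x, x \in X & forall v, rho (block v) = None -> x v = t v.

Record consistent rho X : Prop := Consistent {
  consistent_xor3 : xor3_closed [in X];
  consistent_fixed : forall i b, rho i = Some b -> forall x, x \in X ->
    forall j, encodes x i j -> x (inr (i, j)) = b;
  consistent_realizes : forall t, realizes rho X t }.

Definition falsified_by rho : clause 'I_N := [set l | rho l.1 == Some (~~ l.2)].

Definition extend rho i b : restriction := [ffun i' => if i' == i then Some b else rho i'].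

Lemma consistent_falsified rho X C f :
  consistent rho X -> X \subset falsif (liftC C f) -> C \subset falsified_by rho.
Proof.
move=> [_ fixed real] sub; apply/subsetP => -[i b] lC; rewrite inE /=.
have fals x : x \in X -> encodes x i (f (i, b)) /\ x (inr (i, f (i, b))) = ~~ b.
  by move=> xX; apply: (falsif_liftC (subsetP sub x xX) lC).
case Ei: (rho i) => [be|].
  have [x xX _] := real [ffun=> false]; have [enc <-] := fals x xX.
  by rewrite (fixed _ _ Ei _ xX _ enc).
have [x xX agree] := real [ffun v : V => if v is inr _ then b else false].
by have [_] := fals x xX; rewrite agree //= ffunE; case: (b).
Qed.

Lemma realizes_xor3 rho X : xor3_closed [in X] -> xor3_closed (realizes rho X).
Proof.
move=> X3 t1 t2 t3 [x1 x1X a1] [x2 x2X a2] [x3 x3X a3].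
by exists (xorf x1 (xorf x2 x3)); [apply: X3 | move=> v rv; rewrite !ffunE a1 ?a2 ?a3].
Qed.

Lemma resolvent_falsified_by rho i :
  resolvent (falsified_by (extend rho i false)) (falsified_by (extend rho i true)) i
    \subset falsified_by rho.
Proof.
apply/subsetP => -[i' b]; rewrite !inE !ffunE /= xpair_eqE.
have [->|/negPf ne] := eqVneq i' i; case: b;
  by rewrite ?eqxx ?ne /= ?xpair_eqE ?ne ?eqxx /= ?orbb ?andbF ?orbF.
Qed.

Lemma one_lt_exp2 : 1 < m.
Proof. by rewrite -{1}(expn0 2) ltn_exp2l. Qed.

Definition other_index (j : 'I_m) : 'I_m :=
  if val j == 0 then Ordinal one_lt_exp2 else ord0_exp2 ell.

Lemma other_index_neq j : other_index j != j.
Proof.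
rewrite /other_index -(inj_eq val_inj).
by case: ifP => /= /eqP j0; rewrite eq_sym ?j0 //; apply/eqP.
Qed.

(* Pinning every variable of the block of [u] except [u] itself makes the gadget of
   that block output [b] whatever value [u] takes: all y's are set to [b] and the
   pointer bits to an index different from that of [u]. *)
Definition pin_target u : 'I_m := if u is inr p then other_index p.2 else ord0_exp2 ell.

Definition pin_value u (b : bool) : A :=
  [ffun v : V => if v is inl p then bit (pin_target u) p.2 else b].

Definition pinned u b : {set A} :=
  [set x : A | [forall v, ((block v == block u) && (v != u)) ==> (x v == pin_value u b v)]].

Lemma xor3_closed_pinned u b : xor3_closed [in pinned u b].
Proof.
move=> x y z; rewrite !inE => /forall_inP Hx /forall_inP Hy /forall_inP Hz.
apply/forall_inP => v hv; move: (Hx v hv) (Hy v hv) (Hz v hv); rewrite !ffunE.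
by move=> /eqP -> /eqP -> /eqP ->; rewrite addbb addbF.
Qed.

Lemma pinned_gadget u b x j :
  x \in pinned u b -> encodes x (block u) j -> x (inr (block u, j)) = b.
Proof.
rewrite inE => /forall_inP x_pin enc.
have pin v : block v = block u -> v != u -> x v = pin_value u b v.
  by move=> Ev nvu; apply/eqP/x_pin; rewrite Ev eqxx.
case: u x_pin enc pin => -[i0 j0] _ enc pin /=; first by rewrite pin ?ffunE.
have Ej : j = other_index j0.
  apply/val_inj/(@bit_inj ell); rewrite ?ltn_ord // => j' lt_j'.
  by rewrite -(enc (Ordinal lt_j')) pin ?ffunE.
by rewrite pin ?ffunE //; apply: contra_neq (other_index_neq j0) => -[]; rewrite Ej.
Qed.

Lemma consistent_pin rho X R u b :
  consistent rho X -> xor3_closed [in R] -> rho (block u) = None ->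
  (forall t, realizes rho (X :&: R) t \/ realizes rho (X :&: R) (flip u t)) ->
  consistent (extend rho (block u) b) (X :&: R :&: pinned u b).
Proof.
move=> [X3 fixed _] R3 ru real; split.
- exact/xor3_closedI/xor3_closed_pinned/xor3_closedI.
- move=> i b'; rewrite ffunE; case: eqP => [-> [<-]|_ ri] x /setIP [/setIP [xX _] xpin].
    by move=> j; apply: pinned_gadget.
  exact: fixed ri x xX.
move=> t.
pose t0 : A := [ffun v : V => if (block v == block u) && (v != u) then pin_value u b v else t v].
have from_t0 t' : {in predC1 u, t' =1 t0} -> realizes rho (X :&: R) t' ->
    realizes (extend rho (block u) b) (X :&: R :&: pinned u b) t.
  move=> Et' [x xXR agree]; exists x.
    rewrite inE xXR /= inE; apply/forall_inP => v /andP [/eqP bv nvu].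
    by rewrite agree ?bv // Et' // ffunE bv eqxx nvu.
  move=> v; rewrite ffunE; case: eqP => // nbv rv.
  by rewrite agree // Et' ?ffunE ?(introF eqP nbv) // inE; apply: contra_not_neq nbv => ->.
case: (real t0) => [|]; first exact: from_t0.
by apply: from_t0 => v /negPf nvu; rewrite !ffunE nvu addbF.
Qed.

Lemma consistent_split rho X YA YB :
  consistent rho X -> xor3_closed [in YA] -> xor3_closed [in YB] ->
  X \subset YA :|: YB ->
  [\/ consistent rho (X :&: YA), consistent rho (X :&: YB) |
   exists i X0 X1, [/\ consistent (extend rho i false) X0, X0 \subset YA,
                       consistent (extend rho i true) X1 & X1 \subset YB]].
Proof.
move=> cX YA3 YB3 sXY; have [X3 fixed real] := cX.
have [realA|/not_all_ex_not nP] := classic (forall t, realizes rho (X :&: YA) t).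
  by apply: Or31; split => //; [apply: xor3_closedI | move=> i b ri x /setIP [xX _]; apply: fixed].
have [realB|/not_all_ex_not nQ] := classic (forall t, realizes rho (X :&: YB) t).
  by apply: Or32; split => //; [apply: xor3_closedI | move=> i b ri x /setIP [xX _]; apply: fixed].
set P := realizes rho (X :&: YA); set Q := realizes rho (X :&: YB).
have PQ t : P t \/ Q t.
  have [x xX agree] := real t.
  by case/setUP: (subsetP sXY x xX) => xY; [left | right]; exists x; rewrite ?inE ?xX.
have Pdep t t' : {in [pred v | rho (block v) == None], t =1 t'} -> P t -> P t'.
  by move=> Et [x xXA agree]; exists x => // v rv; rewrite agree // Et // inE /= rv.
have [u /eqP ru flipP] := xor3_cover_flip (@realizes_xor3 rho _ (xor3_closedI X3 YA3))
  (@realizes_xor3 rho _ (xor3_closedI X3 YB3)) PQ nP nQ Pdep.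
apply: Or33; exists (block u), (X :&: YA :&: pinned u false), (X :&: YB :&: pinned u true).
split; try exact: subset_trans (subsetIl _ _) (subsetIr _ _).
  apply: consistent_pin => // t.
  by have [Pt|/flipP] := classic (P t); [left | right].
apply: consistent_pin => // t.
have [Pt|nPt] := classic (P t); last by left; case: (PQ t).
by right; case: (PQ (flip u t)) => // /flipP.
Qed.

Lemma xtree_lift_rt_weak Y s : xtree (liftIND ell phi) Y s ->
  forall rho X, consistent rho X -> X \subset Y -> rt_weak phi (falsified_by rho) s.
Proof.
elim=> [_ /bigcupP [C CF /imsetP [f _ ->]]|YA YB Y0 sA sB TA IHA TB IHB _ sY] rho X cX sXY.
  exact: rt_weakS (rt_weakW (rt_ax CF)) (consistent_falsified cX sXY) _.
have := consistent_split cX (xtree_xor3_closed TA) (xtree_xor3_closed TB) (subset_trans sXY sY).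
case=> [cXA|cXB|[i [X0 [X1 [c0 s0 c1 s1]]]]].
- by apply: rt_weakS (IHA _ _ cXA (subsetIr _ _)) (subxx _) _; lia.
- by apply: rt_weakS (IHB _ _ cXB (subsetIr _ _)) (subxx _) _; lia.
- exact: rt_weakS (rt_weak_res i (IHA _ _ c0 s0) (IHB _ _ c1 s1))
    (resolvent_falsified_by rho i) _.
Qed.

Lemma res_tree_of_xtree_lift s : xtree (liftIND ell phi) setT s ->
  exists2 s', res_tree phi set0 s' & s' <= s.
Proof.
move=> T; apply: rt_weak0.
have -> : set0 = falsified_by [ffun=> None] by apply/setP => l; rewrite !inE ffunE.
apply: xtree_lift_rt_weak T _ _ _ (subxx _); split.
- by move=> *; rewrite inE.
- by move=> i b; rewrite ffunE.
- by move=> t; exists t; rewrite ?inE.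
Qed.

End LiftingGame.

(* This also yields the completeness of tree-like resolution, needed for [tree_Res] to be
   attained. *)
Lemma res_tree_le_tree_ResX N ell (phi : cnf 'I_N) : 0 < ell -> unsat phi ->
  exists2 s, res_tree phi set0 s & s <= tree_ResX (liftIND ell phi).
Proof.
move=> ell_gt0 /(liftIND_unsat (ell := ell)) /xtree_refutation /nat_minP.
exact: res_tree_of_xtree_lift.
Qed.

Theorem corollary19 :
  exists L : nat, forall ell : nat, L <= ell ->
  forall (N k : nat) (phi : cnf 'I_N), is_kCNF k phi -> unsat phi ->
    is_kCNF (k * (ell + 1)) (liftIND ell phi) /\
        #|liftIND ell phi| = \sum_(C in phi) (2 ^ ell) ^ #|C| /\
        #|liftIND ell phi| <= (2 ^ ell) ^ k * #|phi| /\
        ((forall C, C \in phi -> #|C| = k) -> #|liftIND ell phi| = (2 ^ ell) ^ k * #|phi|) /\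
        #|{: lvar N ell}| = N * (ell + 2 ^ ell) /\
        tree_Res phi <= tree_ResX (liftIND ell phi) /\
        2 ^ (width_Res phi - k) <= tree_Res phi.
Proof.
exists 1 => ell ell_gt0 N k phi kphi unsat_phi.
have [s Ts le_s] := res_tree_le_tree_ResX ell_gt0 unsat_phi.
split; first exact: kCNF_liftIND.
split; first exact: card_liftIND.
split; first exact: card_liftIND_le.
split; first exact: card_liftIND_eq.
split; first exact: card_lvar.
split; first exact: leq_trans (nat_min_le Ts) le_s.
exact: exp_width_Res_le_tree kphi (nat_minP (ex_intro _ s Ts)).
Qed.
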